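(* $$\bigcap_{m\ge1}\mathcal{P}_m=\bigcap_{m\ge1,\ m\text{ odd}}\mathcal{P}_m=\langle A_1,A_2\rangle,$$ where $\langle A_1,A_2\rangle$ is the $\mathbb{Z}$-submodule of $\mathbb{Z}^{24}$ generated by $A_1=(1,0,-1)^8=(1,0,-1,1,0,-1,\dots,1,0,-1)$ and $A_2=(0,1,-1,-1,3,-2,-2,5,-3,-3,7,-4,-4,9,-5,-5,11,-6,-6,13,-7,-7,15,-8)$.
   Context: For a positive integer $m$, $\mathcal{P}_m$ is the set of $A\in\mathbb{Z}^{24}$ such that the orbit of $\mathrm{IAP}(\pi_m(A),\pi_m(A)X_{24})$ is $(24m,24m)$-periodic in $\mathbb{Z}/m\mathbb{Z}$. Here $\pi_m$ is reduction mod $m$; tuples are row vectors; $X_{24}=(\delta_{r,s}+\delta_{r,25-s})_{1\le r,s\le24}$. For $24$-tuples $A=(a_0,\dots,a_{23})$, $D=(d_0,\dots,d_{23})$, $\mathrm{IAP}(A,D)=(u_j)_{j\in\mathbb{Z}}$ with $u_{24q+r}=a_r+qd_r$. The orbit of $(u_j)$ is $(a_{i,j})_{(i,j)\in\mathbb{N}\times\mathbb{Z}}$ with $a_{0,j}=u_j$, $a_{i,j}=-a_{i-1,j}-a_{i-1,j+1}$; it is $(p,q)$-periodic if $a_{i+q,j}=a_{i,j+p}=a_{i,j}$ for all $(i,j)$. *)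

From HB Require Import structures.
From mathcomp Require Import all_boot all_order all_algebra.
Set Implicit Arguments. Unset Strict Implicit. Unset Printing Implicit Defensive.
Import Order.TTheory GRing.Theory Num.Theory.
Local Open Scope ring_scope.

(* Z/mZ for m = k.+1 is the additive group 'I_k.+1 (Zp arithmetic);
   this also covers m = 1 (the trivial group). *)
Definition piZ (k : nat) (z : int) : 'I_k.+1 := (Zp1 : 'I_k.+1) *~ z.

(* X_24 = (delta_{r,s} + delta_{r,25-s}), 1-indexed; 0-indexed: r = s or r + s = 23 *)
Definition X24 : 'M[int]_24 :=
  \matrix_(r, s) (((r == s :> nat) : nat) + ((r + s == 23)%N : nat))%:Z.

Definition rowmulZ (V : zmodType) (n : nat) (v : 'rV[V]_n) (M : 'M[int]_n)
  : 'rV[V]_n := \row_s \sum_r (v 0 r *~ M r s).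

(* IAP(A,D) = (u_j)_{j in Z}, u_{24q+r} = a_r + q d_r, 0 <= r < 24 *)
Definition IAP (V : zmodType) (A D : 'rV[V]_24) : int -> V :=
  fun j => let r : 'I_24 := inord (absz (j %% 24)%Z) in
           A 0 r + D 0 r *~ (j %/ 24)%Z.

Fixpoint orbit (V : zmodType) (u : int -> V) (i : nat) : int -> V :=
  match i with
  | 0 => u
  | i'.+1 => fun j => - orbit u i' j - orbit u i' (j + 1)
  end.

Definition periodic (V : zmodType) (a : nat -> int -> V) (p q : nat) : Prop :=
  forall (i : nat) (j : int), a (i + q)%N j = a i j /\ a i (j + p%:Z) = a i j.

(* A in P_m (meaningful for m >= 1) *)
Definition inP (m : nat) (A : 'rV[int]_24) : Prop :=
  let piA : 'rV['I_m.-1.+1]_24 := map_mx (piZ m.-1) A in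
  periodic (orbit (IAP piA (rowmulZ piA X24))) (24 * m) (24 * m).

Definition rowZ (s : seq int) : 'rV[int]_24 := \row_(i < 24) nth 0 s i.

Definition A1 : 'rV[int]_24 := rowZ
  [:: 1; 0; -1; 1; 0; -1; 1; 0; -1; 1; 0; -1; 1; 0; -1; 1; 0; -1; 1; 0; -1; 1; 0; -1].

Definition A2 : 'rV[int]_24 := rowZ
  [:: 0; 1; -1; -1; 3; -2; -2; 5; -3; -3; 7; -4; -4; 9; -5; -5; 11; -6; -6; 13; -7; -7; 15; -8].

From Pilot Require Import Defs.
From mathcomp Require Import all_boot all_order all_algebra.
From mathcomp Require Import ring zify.
Set Implicit Arguments. Unset Strict Implicit. Unset Printing Implicit Defensive.
Import Order.TTheory GRing.Theory Num.Theory.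
Local Open Scope ring_scope.

(* Write T_a u j = - u j - u (j + a), so that the orbit of u is (T_1^i u)_i, and let
   u_A = IAP(A, A X24) over Z. Since u_A (t + 24 q) is affine in q, an identity between
   shifts of u_A holds everywhere once it holds on [0, 48). This gives
   (T_1^3 - 1)^2 u_A = 0 for A = A1, A2, hence T_1^(24 m) u_A = u_A + 8 m (T_1^3 u_A - u_A)
   on the span of A1 and A2, which therefore lies in every P_m.
   Conversely, let B be A minus the element of the span with the same first two entries,
   and suppose 11^k divides B. In characteristic 11 we have T_a^11 = T_(11 a), and u_B
   mod 11 has period 264, so B in P_(11^(k+1)) says that T_a^24 fixes u_(B/11^k) mod 11
   for a = 11 or 121. The 22 sequences (T_a^24 - 1) u_(e_r), 2 <= r < 24, are linearly
   independent over F_11, as certified by an explicit dual basis, so 11^(k+1) divides B.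
   Hence B = 0. *)

Section OrbitBy.
Variable V : zmodType.
Implicit Types (u w : int -> V) (a c j t : int).

Fixpoint orbit_by a u (i : nat) : int -> V :=
  if i is i'.+1 then fun j => - orbit_by a u i' j - orbit_by a u i' (j + a) else u.

Lemma orbit_by1 u i : Defs.orbit u i =1 orbit_by 1 u i.
Proof. by elim: i => //= i IH j; rewrite !IH. Qed.

Lemma eq_orbit_by a u w i : u =1 w -> orbit_by a u i =1 orbit_by a w i.
Proof. by move=> eq_uw; elim: i => //= i IH j; rewrite !IH. Qed.

Lemma orbit_byD a u i k : orbit_by a u (i + k) =1 orbit_by a (orbit_by a u k) i.
Proof. by elim: i => //= i IH j; rewrite !IH. Qed.

Lemma orbit_by_periodic a u c i : (forall t, u (t + c) = u t) ->
  forall j, orbit_by a u i (j + c) = orbit_by a u i j.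
Proof. by move=> per_u; elim: i => //= i IH j; rewrite addrAC !IH. Qed.

Lemma orbit_by_periodicN a u c i (n : nat) : (forall t, u (t + c) = u t) ->
  forall j, orbit_by a u i (j + c * n%:Z) = orbit_by a u i j.
Proof.
move=> per_u j; elim: n => [|n IH]; first by rewrite mulr0 addr0.
by rewrite -addn1 PoszD mulrDr mulr1 addrA orbit_by_periodic.
Qed.

Lemma orbit_by_stepN a u c i (n : nat) : (forall t, u (t + c) = u t) ->
  orbit_by (a + c * n%:Z) u i =1 orbit_by a u i.
Proof.
by move=> per_u; elim: i => //= i IH j; rewrite !IH addrA orbit_by_periodicN.
Qed.

Lemma orbit_by_add a u w i j :
  orbit_by a (fun t => u t + w t) i j = orbit_by a u i j + orbit_by a w i j.
Proof. by elim: i j => //= i IH j; rewrite !IH !opprD addrACA. Qed.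

Lemma orbit_by_opp a u i j : orbit_by a (fun t => - u t) i j = - orbit_by a u i j.
Proof. by elim: i j => //= i IH j; rewrite !IH opprD. Qed.

Lemma orbit_by_sub a u w i j :
  orbit_by a (fun t => u t - w t) i j = orbit_by a u i j - orbit_by a w i j.
Proof. by rewrite orbit_by_add orbit_by_opp. Qed.

Lemma orbit_by_sum (I : finType) (F : I -> int -> V) a i j :
  orbit_by a (fun t => \sum_r F r t) i j = \sum_r orbit_by a (F r) i j.
Proof. by elim: i j => //= i IH j; rewrite !IH sumrB sumrN. Qed.

Lemma orbit_by_binomial a u n j :
  orbit_by a u n j = (\sum_(l < n.+1) u (j + a * l%:Z) *+ 'C(n, l)) *~ (-1) ^+ n.
Proof.
elim: n j => [|n IH] j; first by rewrite big_ord1 mulr0 addr0 expr0 mulr1z.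
rewrite /= !IH exprS mulN1r mulrNz -opprD -mulrzDl; congr (- (_ *~ _)).
rewrite [in RHS]big_ord_recl /=.
under [in RHS]eq_bigr => l _ do rewrite binS mulrnDr.
rewrite big_split /= addrA; congr (_ + _).
  rewrite [in LHS]big_ord_recl [in RHS]big_ord_recr /= (bin_small (ltnSn n)) !bin0 addr0.
  by congr (_ + _); apply: eq_bigr => l _.
by apply: eq_bigr => l _; rewrite /bump /= add1n; congr (u _ *+ _); rewrite intS; ring.
Qed.

End OrbitBy.
Arguments orbit_by {V}.

Lemma orbit_by_morph (V W : zmodType) (f : V -> W) : {morph f : x y / x - y} ->
  forall a (u : int -> V) i j, f (orbit_by a u i j) = orbit_by a (f \o u) i j.
Proof.
move=> fB a u i; have f0 : f 0 = 0 by rewrite -(subrr 0) fB subrr.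
have fN x : f (- x) = - f x by rewrite -sub0r fB f0 sub0r.
by elim: i => //= i IH j; rewrite fB fN !IH.
Qed.

Lemma orbit_by_mull (R : pzRingType) (c : R) a (u : int -> R) i j :
  orbit_by a (fun t => c * u t) i j = c * orbit_by a u i j.
Proof. by rewrite (orbit_by_morph (mulrBr c)). Qed.

Section Drift.
Variable V : zmodType.
Implicit Types (u : int -> V) (a t : int).

Definition drift a u n t := orbit_by a u n t - u t.

Lemma orbit_by_drift a u n : orbit_by a (drift a u n) n =1 drift a u n ->
  forall k t, orbit_by a u (n * k) t = u t + drift a u n t *+ k.
Proof.
move=> driftT; elim=> [|k IH] t; first by rewrite muln0 mulr0n addr0.
rewrite mulnS orbit_byD (eq_orbit_by _ _ IH) orbit_by_add.
rewrite -(orbit_by_morph (mulrnBl k)) driftT mulrS addrA.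
by rewrite /drift [u t + _]addrC subrK.
Qed.

End Drift.

Section Frobenius.
Variables (V : zmodType) (p : nat).
Hypotheses (p_prime : prime p) (p_odd : odd p) (charV : forall x : V, x *+ p = 0).

Lemma orbit_by_prime a (u : int -> V) j : orbit_by a u p j = - u j - u (j + a * p%:Z).
Proof.
rewrite orbit_by_binomial -signr_odd p_odd expr1 mulrN1z.
rewrite -(big_mkord xpredT (fun l => u (j + a * l%:Z) *+ 'C(p, l))).
rewrite big_nat_recl // -(prednK (prime_gt0 p_prime)) big_nat_recr //= prednK ?prime_gt0 //.
rewrite bin0 binn mulr0 addr0 !mulr1n big_nat big1 ?add0r ?opprD // => l /andP[_ lt_l].
have /dvdnP[c ->] : (p %| 'C(p, l.+1))%N.
  by apply: prime_dvd_bin => //; rewrite -ltn_predRL.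
by rewrite mulnC mulrnA charV mul0rn.
Qed.

Lemma orbit_by_primeM a (u : int -> V) n : orbit_by a u (p * n) =1 orbit_by (a * p%:Z) u n.
Proof.
elim: n => [|n IH] j; first by rewrite muln0.
by rewrite mulnS orbit_byD orbit_by_prime /= !IH.
Qed.

Lemma orbit_by_primeX a (u : int -> V) n e :
  orbit_by a u (n * p ^ e) =1 orbit_by (a * (p ^ e)%:Z) u n.
Proof.
elim: e a => [|e IH] a j; first by rewrite muln1 mulr1.
by rewrite expnS mulnCA orbit_by_primeM IH PoszM mulrA.
Qed.

End Frobenius.

Lemma val_Zp1_mulrn k n : val (Zp1 *+ n : 'I_k.+1) = (n %% k.+1)%N.
Proof. by rewrite Zp_mulrn /= modnMml mul1n. Qed.

Lemma piZB k : {morph piZ k : x y / x - y}.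
Proof. by move=> x y; rewrite /piZ mulrzBr. Qed.

Lemma piZ_eq0 k z : (piZ k z == 0) = (k.+1%:Z %| z)%Z.
Proof.
have -> : (piZ k z == 0) = (Zp1 *+ `|z|%N == 0 :> 'I_k.+1).
  by case: z => n //; rewrite /piZ NegzE mulrNz oppr_eq0.
by rewrite dvdzE -val_eqE val_Zp1_mulrn.
Qed.

Lemma piZ_eq k x y : (piZ k x == piZ k y) = (k.+1%:Z %| x - y)%Z.
Proof. by rewrite -piZ_eq0 piZB subr_eq0. Qed.

Lemma edivz24 (t : int) : exists (q : int) (n : 'I_24), t = q * 24 + n%:Z.
Proof.
have mod_ge0 : 0 <= (t %% 24)%Z by rewrite modz_ge0.
have mod_lt : (`|(t %% 24)%Z| < 24)%N.
  by rewrite -ltz_nat gez0_abs // ltz_pmod.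
by exists (t %/ 24)%Z, (Ordinal mod_lt); rewrite /= gez0_abs // -divz_eq.
Qed.

Lemma IAP_at (V : zmodType) (A D : 'rV[V]_24) q (n : 'I_24) :
  IAP A D (q * 24 + n%:Z) = A 0 n + D 0 n *~ q.
Proof.
rewrite /IAP modzMDl divzMDl // modz_nat divz_nat modn_small // divn_small // addr0.
by rewrite /= (_ : inord n = n) //; apply/val_inj; rewrite /= inordK.
Qed.

Lemma rowmulZ_X24 (V : zmodType) (v : 'rV[V]_24) s :
  rowmulZ v X24 0 s = v 0 s + v 0 (rev_ord s).
Proof.
have sum_delta (P : pred 'I_24) s0 : P =1 pred1 s0 ->
    \sum_r v 0 r *~ (P r : nat)%:Z = v 0 s0.
  move=> defP; rewrite (bigD1 s0) ?defP //= eqxx big1 ?addr0 // => r.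
  by rewrite defP => /negbTE /= ->.
rewrite /rowmulZ mxE; under eq_bigr do rewrite /X24 mxE PoszD mulrzDr.
rewrite big_split /= (sum_delta _ s) ?(sum_delta _ (rev_ord s)) // => r /=.
by apply/eqP/eqP => [e|->]; [apply/val_inj|]; move: (ltn_ord s) => /=; lia.
Qed.

Definition iapX (A : 'rV[int]_24) : int -> int := IAP A (rowmulZ A X24).

Lemma iapX_at A q (n : 'I_24) :
  iapX A (q * 24 + n%:Z) = A 0 n + (A 0 n + A 0 (rev_ord n)) * q.
Proof. by rewrite /iapX IAP_at rowmulZ_X24 mulrzz. Qed.

Lemma iapX_reduce k A :
  IAP (map_mx (piZ k) A) (rowmulZ (map_mx (piZ k) A) X24) =1 piZ k \o iapX A.
Proof.
move=> t; have [q [n ->]] := edivz24 t.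
by rewrite IAP_at /= iapX_at rowmulZ_X24 !mxE /piZ mulrzDr mulrzA mulrzDr.
Qed.

Lemma iapXD A B t : iapX (A + B) t = iapX A t + iapX B t.
Proof. by have [q [n ->]] := edivz24 t; rewrite !iapX_at !mxE; ring. Qed.

Lemma iapXZ x A t : iapX (x *: A) t = x * iapX A t.
Proof. by have [q [n ->]] := edivz24 t; rewrite !iapX_at !mxE; ring. Qed.

Lemma iapXB A B t : iapX (A - B) t = iapX A t - iapX B t.
Proof. by have [q [n ->]] := edivz24 t; rewrite !iapX_at !mxE; ring. Qed.

Lemma iapX0 t : iapX 0 t = 0.
Proof. by rewrite -(scale0r 0) iapXZ mul0r. Qed.

Lemma iapX_sum C t : iapX C t = \sum_r C 0 r * iapX (delta_mx 0 r) t.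
Proof.
rewrite {1}(row_sum_delta C) (big_morph (iapX^~ t) (fun A B => iapXD A B t) (iapX0 t)).
by apply: eq_bigr => r _; rewrite iapXZ.
Qed.

Lemma iapX_lin A B x y t : iapX (A *~ x + B *~ y) t = x * iapX A t + y * iapX B t.
Proof. by rewrite -!scaler_int !intz iapXD !iapXZ. Qed.

Definition iapX_seq (s : seq int) (t : int) : int :=
  let r := `|(t %% 24)%Z|%N in nth 0 s r + (nth 0 s r + nth 0 s (23 - r)) * (t %/ 24)%Z.

Lemma iapX_rowZ s : iapX (rowZ s) =1 iapX_seq s.
Proof.
move=> t; have [q [n ->]] := edivz24 t.
rewrite iapX_at /iapX_seq !mxE modzMDl divzMDl // modz_nat divz_nat.
by rewrite modn_small // divn_small // addr0 /= subSS.
Qed.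

Definition block_affine (P : int) (f : int -> int) :=
  forall t q, f (t + P * q) = f t + (f (t + P) - f t) * q.

Lemma block_affine_iapX A : block_affine 24 (iapX A).
Proof.
move=> t q; have [q0 [n ->]] := edivz24 t.
have -> : q0 * 24 + n%:Z + 24 * q = (q0 + q) * 24 + n%:Z by ring.
have -> : q0 * 24 + n%:Z + 24 = (q0 + 1) * 24 + n%:Z by ring.
by rewrite !iapX_at; ring.
Qed.

Lemma block_affineB P f g :
  block_affine P f -> block_affine P g -> block_affine P (fun t => f t - g t).
Proof. by move=> bf bg t q; rewrite bf bg; ring. Qed.

Lemma block_affine_orbit_by P a f i :
  block_affine P f -> block_affine P (orbit_by a f i).
Proof.
move=> bf; elim: i => //= i IH t q.
by rewrite addrAC IH (addrAC t P a) (IH (t + a)); ring.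
Qed.

Lemma block_affine_dvd P f (m t : int) : block_affine P f -> (m %| f (t + P * m) - f t)%Z.
Proof. by move=> bf; rewrite bf addrAC subrr add0r dvdz_mull. Qed.

Lemma block_affine_eq0 (P : nat) f : (0 < P)%N -> block_affine P f ->
  (forall x : nat, (x < P.*2)%N -> f x = 0) -> forall t, f t = 0.
Proof.
move=> P_gt0 bf f0 t.
have mod_ge0 : 0 <= (t %% P)%Z by rewrite modz_ge0 // eqz_nat -lt0n.
have mod_lt : (`|(t %% P)%Z| < P)%N by rewrite -ltz_nat gez0_abs // ltz_pmod.
rewrite (divz_eq t P) mulrC addrC -(gez0_abs mod_ge0) bf -PoszD.
by rewrite !f0 ?subrr ?mul0r ?addr0 // -addnn ?ltn_add2r ?ltn_addr.
Qed.

Lemma block_affine_iapX_seq s : block_affine 24 (iapX_seq s).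
Proof. by move=> t q; rewrite -!iapX_rowZ block_affine_iapX. Qed.

Lemma drift3_rowZ_fixed s :
  all (fun x : nat => orbit_by 1 (drift 1 (iapX_seq s) 3) 3 x == drift 1 (iapX_seq s) 3 x)
      (iota 0 48) ->
  orbit_by 1 (drift 1 (iapX (rowZ s)) 3) 3 =1 drift 1 (iapX (rowZ s)) 3.
Proof.
move=> /allP chk t; apply/eqP; rewrite -subr_eq0; apply/eqP.
have eq_drift : drift 1 (iapX (rowZ s)) 3 =1 drift 1 (iapX_seq s) 3.
  by move=> t'; rewrite /drift (eq_orbit_by _ _ (iapX_rowZ s)) iapX_rowZ.
rewrite (eq_orbit_by _ _ eq_drift) eq_drift; move: t.
have affine_u := block_affine_iapX_seq s.
have affine_drift := block_affineB (block_affine_orbit_by 1 3 affine_u) affine_u.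
have affine_defect := block_affineB (block_affine_orbit_by 1 3 affine_drift) affine_drift.
apply: (block_affine_eq0 _ affine_defect) => // x lt_x.
by apply/eqP; rewrite subr_eq0; apply: chk; rewrite mem_iota.
Qed.

Lemma drift3_span_fixed x y (u := iapX (A1 *~ x + A2 *~ y)) :
  orbit_by 1 (drift 1 u 3) 3 =1 drift 1 u 3.
Proof.
have fixed1 : orbit_by 1 (drift 1 (iapX A1) 3) 3 =1 drift 1 (iapX A1) 3.
  by apply: drift3_rowZ_fixed; vm_compute.
have fixed2 : orbit_by 1 (drift 1 (iapX A2) 3) 3 =1 drift 1 (iapX A2) 3.
  by apply: drift3_rowZ_fixed; vm_compute.
have orbit_lin i t :
    orbit_by 1 u i t = x * orbit_by 1 (iapX A1) i t + y * orbit_by 1 (iapX A2) i t.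
  by rewrite (eq_orbit_by _ _ (iapX_lin A1 A2 x y)) orbit_by_add !orbit_by_mull.
have drift_lin : drift 1 u 3 =1 fun t => x * drift 1 (iapX A1) 3 t + y * drift 1 (iapX A2) 3 t.
  by move=> t; rewrite /drift orbit_lin -[u t]/(orbit_by 1 u 0 t) (orbit_lin 0%N) /=; ring.
move=> t; rewrite (eq_orbit_by _ _ drift_lin) orbit_by_add !orbit_by_mull.
by rewrite fixed1 fixed2 drift_lin.
Qed.

Lemma span_orbit_periodic x y m i j (u := iapX (A1 *~ x + A2 *~ y)) :
  (m%:Z %| orbit_by 1 u (i + 24 * m) j - orbit_by 1 u i j)%Z.
Proof.
rewrite orbit_byD (_ : 24 * m = 3 * (8 * m))%N; last by rewrite mulnA.
rewrite (eq_orbit_by _ _ (orbit_by_drift (drift3_span_fixed x y) _)) orbit_by_add.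
rewrite addrAC subrr add0r.
by rewrite -(orbit_by_morph (mulrnBl _)) /= -mulr_natr natz PoszM mulrA dvdz_mull.
Qed.

Lemma orbit_reduce k A i :
  Defs.orbit (IAP (map_mx (piZ k) A) (rowmulZ (map_mx (piZ k) A) X24)) i
  =1 piZ k \o orbit_by 1 (iapX A) i.
Proof.
by move=> j; rewrite orbit_by1 (eq_orbit_by _ _ (iapX_reduce k A)) -(orbit_by_morph (piZB k)).
Qed.

Lemma inP_iff m A : (0 < m)%N -> inP m A <->
  forall i j, (m%:Z %| orbit_by 1 (iapX A) (i + 24 * m) j - orbit_by 1 (iapX A) i j)%Z.
Proof.
case: m => // k _; rewrite /inP /periodic /=; split=> [per i j | per i j].
  by have [+ _] := per i j; rewrite !orbit_reduce /= => /eqP; rewrite piZ_eq.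
rewrite !orbit_reduce /=; split; apply/eqP; rewrite piZ_eq // PoszM.
exact/block_affine_dvd/block_affine_orbit_by/block_affine_iapX.
Qed.

Lemma nth_rot (T : Type) (x0 : T) n s i : (n <= size s)%N -> (i < size s)%N ->
  nth x0 (rot n s) i = nth x0 s ((i + n) %% size s).
Proof.
move=> le_n lt_i; rewrite nth_cat size_drop nth_drop; case: ltnP => [lt_in|le_in].
  by rewrite modn_small addnC //; lia.
have -> : (i + n = i - (size s - n) + size s)%N by lia.
by rewrite nth_take ?modnDr ?modn_small //; lia.
Qed.

(* Evaluating [orbit_by] pointwise costs 2^i evaluations of u; on a periodic u the lists
   below compute the whole orbit one period at a time. *)
Section OrbitList.
Variables (V : zmodType) (a : nat).

Definition orbit_list (l : seq V) : seq V :=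
  [seq - x.1 - x.2 | x <- zip l (rot (a %% size l) l)].

Lemma size_orbit_list l : size (orbit_list l) = size l.
Proof. by rewrite size_map size_zip size_rot minnn. Qed.

Lemma nth_orbit_list l k : (k < size l)%N ->
  nth 0 (orbit_list l) k = - nth 0 l k - nth 0 l ((k + a) %% size l).
Proof.
move=> lt_k; rewrite (nth_map (0, 0)) ?size_zip ?size_rot ?minnn // nth_zip ?size_rot //=.
have size_gt0 : (0 < size l)%N by apply: leq_ltn_trans lt_k.
by rewrite nth_rot // ?modnDmr // ltnW // ltn_pmod.
Qed.

Lemma orbit_by_list (N : nat) (u : int -> V) i : (forall t, u (t + N%:Z) = u t) ->
  forall k, (k < N)%N ->
  orbit_by a%:Z u i k%:Z = nth 0 (iter i orbit_list (mkseq (fun k => u k%:Z) N)) k.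
Proof.
move=> per_u; elim: i => [|i IH] k lt_kN /=; first by rewrite nth_mkseq.
have N_gt0 : (0 < N)%N by apply: leq_ltn_trans lt_kN.
have size_iter j : size (iter j orbit_list (mkseq (fun k => u k%:Z) N)) = N.
  by elim: j => [|j IHj] /=; rewrite ?size_orbit_list ?size_mkseq.
have -> : k%:Z + a%:Z = ((k + a) %% N)%N%:Z + N%:Z * ((k + a) %/ N)%N%:Z.
  by rewrite -PoszD {1}(divn_eq (k + a) N) PoszD PoszM addrC mulrC.
by rewrite orbit_by_periodicN // nth_orbit_list size_iter // -!IH ?ltn_pmod.
Qed.

End OrbitList.

Section DualCertificate.
Variable R : comRingType.

Definition lincomb (c : seq (nat * nat)) (f : nat -> R) : R :=
  foldr (fun p acc => p.2%:R * f p.1 + acc) 0 c.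

Lemma lincomb_eq0 c f : (forall k, f k = 0) -> lincomb c f = 0.
Proof. by move=> f0; elim: c => //= p c ->; rewrite f0 mulr0 addr0. Qed.

Lemma lincomb_sum (I : finType) c (x : I -> R) (f : I -> nat -> R) :
  lincomb c (fun k => \sum_r x r * f r k) = \sum_r x r * lincomb c (f r).
Proof.
elim: c => [|p c IH] /=; first by rewrite big1 // => r _; rewrite mulr0.
by rewrite IH mulr_sumr -big_split; apply: eq_bigr => r _ /=; rewrite mulrDr mulrCA.
Qed.

Lemma dual_coef_eq0 (I : finType) (S : pred I) (f : I -> nat -> R)
    (phi : I -> seq (nat * nat)) (x : I -> R) :
  (forall r0 r, S r0 -> S r -> lincomb (phi r0) (f r) = (r == r0)%:R) ->
  (forall r, ~~ S r -> x r = 0) ->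
  (forall k, \sum_r x r * f r k = 0) -> forall r, x r = 0.
Proof.
move=> dual xS0 sum0 r0; have [Sr0|/xS0 //] := boolP (S r0).
have := lincomb_eq0 (phi r0) sum0; rewrite lincomb_sum (bigD1 r0) //= dual // eqxx mulr1.
rewrite big1 ?addr0 // => r ne_r; have [Sr|/xS0 ->] := boolP (S r); last by rewrite mul0r.
by rewrite dual // (negbTE ne_r) mulr0.
Qed.

End DualCertificate.

Definition unit_seq (r : nat) : seq int := mkseq (fun i => (i == r)%:R) 24.

Lemma rowZ_unit_seq (r : 'I_24) : rowZ (unit_seq r) = delta_mx 0 r.
Proof. by apply/rowP => i; rewrite !mxE nth_mkseq. Qed.

Definition basis11 (r : nat) (t : int) : 'I_11 := piZ 10 (iapX_seq (unit_seq r) t).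

Lemma piZ11_iapX C t : piZ 10 (iapX C t) = \sum_r piZ 10 (C 0 r) * basis11 r t.
Proof.
rewrite iapX_sum /piZ (big_morph (fun z : int => z%:~R : 'I_11) (@intrD _) (mulr0z 1)).
by apply: eq_bigr => r _; rewrite intrM -rowZ_unit_seq iapX_rowZ.
Qed.

Lemma basis11_periodic r t : basis11 r (t + 264) = basis11 r t.
Proof. by apply/eqP; rewrite piZ_eq; apply: (block_affine_dvd 11 t (block_affine_iapX_seq _)). Qed.

Definition drift_list (a r : nat) : seq 'I_11 :=
  let l := mkseq (fun k => basis11 r k%:Z) 264 in
  let l' := iter 24 (orbit_list a) l in
  mkseq (fun k => nth 0 l' k - nth 0 l k) 264.

Lemma nth_drift_list a r k :
  nth 0 (drift_list a r) k = if (k < 264)%N then drift a%:Z (basis11 r) 24 k%:Z else 0.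
Proof.
case: ifP => [lt_k|/negbT]; last by rewrite -leqNgt => le_k; rewrite nth_default ?size_mkseq.
rewrite /drift (@orbit_by_list _ a 264) // => [|t]; last exact: basis11_periodic.
by rewrite [LHS]nth_mkseq // [X in _ - X]nth_mkseq.
Qed.
(* Row r0 - 2 lists (index, coefficient) pairs of a functional on the first 22 entries
   that takes the value [r == r0] on [drift_list a r] for 2 <= r < 24, for both a = 11
   and a = 121; it was found by Gaussian elimination over F_11. *)
Definition dual11 : seq (seq (nat * nat)) := [::
  [:: (0, 9); (1, 7); (2, 3); (3, 3); (4, 8); (5, 5); (6, 8); (7, 1); (8, 9); (9, 6); (10, 4); (11, 6); (12, 2); (13, 10); (14, 8); (15, 3); (16, 4); (17, 3); (18, 4); (19, 4); (20, 3); (21, 4)];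
  [:: (0, 8); (1, 1); (3, 4); (4, 7); (5, 5); (6, 4); (7, 1); (8, 4); (9, 1); (10, 4); (11, 7); (12, 7); (13, 7); (14, 2); (15, 1); (16, 9); (17, 3); (18, 5); (19, 10); (20, 4)];
  [:: (0, 8); (1, 5); (2, 10); (3, 1); (4, 4); (5, 1); (6, 1); (7, 6); (8, 6); (9, 7); (11, 10); (12, 10); (14, 3); (15, 5); (16, 7); (17, 8); (18, 5); (19, 1); (20, 4); (21, 7)];
  [:: (0, 8); (1, 9); (3, 1); (4, 1); (5, 10); (6, 10); (7, 2); (8, 8); (9, 7); (10, 7); (11, 3); (12, 5); (13, 7); (14, 8); (15, 4); (16, 9); (17, 9); (18, 3); (19, 4); (20, 3); (21, 4)];
  [:: (0, 5); (1, 7); (2, 9); (3, 1); (4, 9); (5, 5); (6, 1); (7, 6); (8, 2); (9, 1); (10, 9); (11, 8); (15, 9); (16, 5); (17, 7); (18, 2); (19, 4); (20, 8)];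
  [:: (0, 9); (1, 2); (2, 2); (5, 1); (6, 7); (7, 10); (8, 3); (9, 3); (10, 5); (11, 5); (12, 10); (13, 6); (14, 7); (15, 6); (16, 10); (17, 3); (19, 9); (20, 6); (21, 7)];
  [:: (0, 3); (1, 10); (2, 4); (3, 9); (4, 3); (7, 2); (8, 6); (9, 10); (10, 1); (11, 8); (12, 6); (13, 5); (15, 9); (16, 6); (17, 9); (18, 6); (19, 4); (20, 2); (21, 3)];
  [:: (0, 10); (1, 3); (3, 6); (4, 4); (5, 10); (6, 3); (7, 1); (8, 3); (9, 9); (10, 9); (11, 3); (15, 7); (16, 4); (17, 4); (18, 8); (19, 6); (20, 5); (21, 3)];
  [:: (0, 2); (1, 9); (2, 10); (3, 5); (4, 8); (5, 4); (6, 8); (7, 9); (8, 9); (9, 7); (10, 7); (11, 2); (12, 5); (13, 6); (15, 2); (16, 1); (17, 9); (18, 10); (19, 5); (21, 10)];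
  [:: (0, 3); (1, 4); (2, 1); (3, 1); (4, 7); (5, 4); (6, 4); (7, 2); (8, 3); (9, 1); (10, 7); (11, 8); (12, 10); (13, 10); (14, 7); (15, 6); (16, 3); (17, 1); (18, 6); (20, 1)];
  [:: (0, 7); (2, 5); (3, 2); (4, 9); (5, 9); (6, 10); (7, 5); (8, 2); (9, 1); (10, 8); (11, 2); (12, 5); (13, 4); (14, 6); (15, 7); (16, 1); (17, 10); (18, 8); (19, 8); (20, 10); (21, 8)];
  [:: (0, 3); (1, 5); (2, 8); (3, 4); (4, 8); (5, 5); (6, 1); (7, 9); (8, 1); (9, 6); (10, 5); (11, 6); (12, 7); (13, 8); (14, 10); (15, 6); (16, 1); (17, 3); (19, 5); (20, 1); (21, 7)];
  [:: (0, 2); (1, 1); (2, 5); (3, 1); (4, 10); (5, 7); (6, 4); (7, 10); (9, 10); (11, 2); (12, 1); (13, 8); (14, 6); (15, 6); (16, 4); (17, 9); (18, 1); (20, 8); (21, 6)];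
  [:: (0, 7); (1, 5); (2, 7); (3, 1); (4, 9); (5, 8); (6, 7); (7, 6); (8, 5); (9, 10); (10, 3); (11, 3); (12, 10); (13, 9); (14, 9); (15, 10); (16, 10); (17, 6); (18, 3); (20, 5); (21, 10)];
  [:: (0, 4); (1, 1); (2, 7); (3, 1); (4, 4); (5, 2); (6, 7); (7, 9); (8, 8); (9, 8); (10, 5); (11, 4); (13, 6); (14, 4); (16, 4); (17, 6); (18, 1); (20, 1); (21, 9)];
  [:: (0, 8); (1, 8); (2, 4); (3, 1); (4, 7); (5, 6); (6, 1); (8, 9); (9, 6); (11, 4); (12, 9); (13, 8); (14, 4); (15, 2); (16, 9); (18, 2); (19, 4); (20, 10); (21, 7)];
  [:: (1, 6); (2, 2); (3, 7); (4, 3); (5, 4); (7, 10); (8, 4); (9, 4); (10, 7); (11, 6); (12, 7); (13, 6); (14, 5); (15, 3); (18, 10); (19, 3); (20, 4); (21, 9)];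
  [:: (0, 6); (1, 9); (3, 10); (4, 2); (5, 3); (6, 6); (8, 3); (9, 5); (10, 10); (11, 9); (13, 1); (14, 8); (16, 5); (17, 4); (18, 9); (19, 10); (20, 1)];
  [:: (0, 10); (1, 3); (2, 1); (3, 1); (4, 4); (5, 3); (6, 8); (7, 1); (8, 8); (9, 10); (10, 4); (11, 5); (12, 7); (14, 1); (15, 5); (16, 1); (17, 9); (18, 1); (19, 4); (20, 1)];
  [:: (0, 1); (1, 8); (2, 5); (3, 7); (4, 1); (5, 7); (6, 8); (7, 9); (9, 9); (10, 10); (11, 4); (12, 2); (13, 3); (14, 7); (15, 3); (16, 3); (17, 10); (18, 9); (19, 8); (20, 4); (21, 6)];
  [:: (0, 1); (1, 3); (2, 10); (4, 3); (5, 6); (6, 5); (7, 5); (9, 4); (10, 8); (11, 3); (12, 3); (13, 10); (14, 5); (15, 5); (17, 1); (18, 3); (19, 8); (20, 7); (21, 5)];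
  [:: (0, 3); (1, 4); (2, 4); (3, 2); (4, 10); (5, 8); (6, 4); (7, 6); (8, 3); (9, 10); (10, 8); (11, 4); (12, 2); (13, 7); (14, 6); (15, 4); (16, 3); (17, 8); (18, 2); (19, 2); (20, 6); (21, 10)]].

Definition dual_check (a : nat) : bool :=
  all (fun r => let W := drift_list a r in
    all (fun r0 => lincomb (nth [::] dual11 (r0 - 2)) (nth 0 W) == (r == r0)%:R) (iota 2 22))
  (iota 2 22).

Lemma drift11_coef_eq0 a (c : 'I_24 -> 'I_11) : a \in [:: 11; 121]%N ->
  (forall r : 'I_24, (r < 2)%N -> c r = 0) ->
  (forall k : nat, \sum_r c r * drift a%:Z (basis11 r) 24 k%:Z = 0) -> forall r, c r = 0.
Proof.
move=> a_in c_lt2 sum0; apply: (@dual_coef_eq0 _ _ (fun r : 'I_24 => 2 <= r)%N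
  (fun r => nth 0 (drift_list a r)) (fun r0 => nth [::] dual11 (r0 - 2))).
- have /allP chk : dual_check a by move: a_in; rewrite !inE => /orP[]/eqP->; vm_compute.
  have mem_r (r : 'I_24) : (2 <= r)%N -> (r : nat) \in iota 2 22.
    by rewrite mem_iota => ->; apply: ltn_ord.
  by move=> r0 r /mem_r r0_in /mem_r /chk /allP /(_ _ r0_in) /eqP.
- by move=> r; rewrite -leqNgt; apply: c_lt2.
move=> k; case: (ltnP k 264) => [lt_k|le_k].
  by rewrite -[RHS](sum0 k); apply: eq_bigr => r _; rewrite nth_drift_list lt_k.
by rewrite big1 // => r _; rewrite nth_drift_list ltnNge le_k mulr0.
Qed.

Lemma pow11_mod264 e : (11 ^ e.+1 %% 264 \in [:: 11; 121])%N.
Proof.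
elim: e => [//|e IH]; rewrite expnS -modnMmr.
by move: IH; rewrite !inE => /orP[]/eqP->.
Qed.

Lemma orbit_by_pow11 (v : int -> 'I_11) e : (forall t, v (t + 264) = v t) ->
  orbit_by 1 v (24 * 11 ^ e) =1 orbit_by (11 ^ e %% 264)%N%:Z v 24.
Proof.
move=> per_v j; have char11 (x : 'I_11) : x *+ 11 = 0.
  by rewrite -mulr_natr (pchar_Zp (isT : 1 < 11)%N) mulr0.
rewrite (orbit_by_primeX _ _ char11) // mul1r {1}(divn_eq (11 ^ e) 264) PoszD addrC PoszM mulrC.
by rewrite orbit_by_stepN.
Qed.

Lemma dvd11_of_orbit (C : 'rV[int]_24) e : C 0 0 = 0 -> C 0 1 = 0 ->
  (forall j, (11 %| orbit_by 1 (iapX C) (24 * 11 ^ e.+1) j - iapX C j)%Z) ->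
  forall r, (11 %| C ord0 r)%Z.
Proof.
move=> C0 C1 fixC r; rewrite -(piZ_eq0 10).
pose c r := piZ 10 (C 0 r); pose v t := piZ 10 (iapX C t).
suff: c r = 0 by move/eqP.
have c_lt2 (r' : 'I_24) : (r' < 2)%N -> c r' = 0.
  case: r' => [[|[|//]] lt_r] _.
    by rewrite /c (_ : Ordinal lt_r = 0) ?C0 //; apply/val_inj.
  by rewrite /c (_ : Ordinal lt_r = 1) ?C1 //; apply/val_inj.
have per_v t : v (t + 264) = v t.
  by apply/eqP; rewrite piZ_eq; apply: (block_affine_dvd 11 t (block_affine_iapX C)).
have fix_v k : orbit_by (11 ^ e.+1 %% 264)%N%:Z v 24 k = v k.
  rewrite -(orbit_by_pow11 e.+1 per_v); apply/eqP.
  by rewrite /v -(orbit_by_morph (piZB 10)) piZ_eq fixC.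
apply: (drift11_coef_eq0 (pow11_mod264 e) c_lt2) => k.
have -> : \sum_r c r * drift (11 ^ e.+1 %% 264)%N%:Z (basis11 r) 24 k =
          orbit_by (11 ^ e.+1 %% 264)%N%:Z v 24 k - v k.
  rewrite (eq_orbit_by _ _ (piZ11_iapX C)) orbit_by_sum /v piZ11_iapX -sumrB.
  by apply: eq_bigr => r' _; rewrite orbit_by_mull mulrBr.
by rewrite fix_v subrr.
Qed.

Lemma eq0_of_dvdz_pow (p : nat) (x : int) : (1 < p)%N ->
  (forall e, ((p ^ e)%:Z %| x)%Z) -> x = 0.
Proof.
move=> p_gt1 dvd_x; apply/eqP; apply: contraT; rewrite -absz_gt0 => x_gt0.
by have := dvdn_leq x_gt0 (dvd_x `|x|%N); rewrite /= leqNgt ltn_expl.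
Qed.

Lemma row_eq0_of_odd_orbit (B : 'rV[int]_24) : B 0 0 = 0 -> B 0 1 = 0 ->
  (forall m, odd m -> forall j, (m%:Z %| orbit_by 1 (iapX B) (24 * m) j - iapX B j)%Z) ->
  B = 0.
Proof.
move=> B0 B1 perB.
suff dvdB e r : ((11 ^ e)%:Z %| B ord0 r)%Z.
  by apply/rowP => r; rewrite mxE; apply: (@eq0_of_dvdz_pow 11) => // e; apply: dvdB.
have pow_neq0 k : (11 ^ k)%:Z != 0 by rewrite eqz_nat expn_eq0.
elim: e r => [|e IH] r; first by rewrite expn0 dvd1z.
pose C := \row_r' (B ord0 r' %/ (11 ^ e)%:Z)%Z.
have defB : B = (11 ^ e)%:Z *: C by apply/rowP => i; rewrite !mxE mulrC divzK.
have C0 : C 0 0 = 0 by rewrite mxE B0 div0z.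
have C1 : C 0 1 = 0 by rewrite mxE B1 div0z.
rewrite defB mxE expnSr PoszM dvdz_mul2l //; apply: (@dvd11_of_orbit C e C0 C1 _ r) => j.
have := perB (11 ^ e.+1)%N; rewrite oddX orbT => /(_ isT j).
rewrite defB (eq_orbit_by _ _ (iapXZ _ _)) orbit_by_mull iapXZ -mulrBr.
by rewrite expnSr PoszM dvdz_mul2l.
Qed.

Lemma span_inP x y m : (0 < m)%N -> inP m (A1 *~ x + A2 *~ y).
Proof. by move=> m_gt0; apply/inP_iff => // i j; apply: span_orbit_periodic. Qed.

Lemma odd_inP_span A : (forall m, (0 < m)%N -> odd m -> inP m A) ->
  exists x y, A = A1 *~ x + A2 *~ y.
Proof.
move=> oddA; exists (A 0 0), (A 0 1); apply/eqP; rewrite -subr_eq0; apply/eqP.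
set S := A1 *~ A 0 0 + A2 *~ A 0 1.
have entryB i : (A - S) 0 i = A 0 i - (A 0 0 * A1 0 i + A 0 1 * A2 0 i).
  by rewrite /S -!scaler_int !intz !mxE.
apply: row_eq0_of_odd_orbit => [||m m_odd j].
- by rewrite entryB /A1 /A2 /rowZ !mxE /=; ring.
- by rewrite entryB /A1 /A2 /rowZ !mxE /=; ring.
have m_gt0 : (0 < m)%N by rewrite odd_gt0.
have := span_orbit_periodic (A 0 0) (A 0 1) m 0 j.
have := proj1 (inP_iff A m_gt0) (oddA m m_gt0 m_odd) 0%N j.
rewrite !add0n (eq_orbit_by _ _ (iapXB A S)) orbit_by_sub iapXB /= => dvdA dvdS.
have -> : forall a b c d : int, a - b - (c - d) = a - c - (b - d) by move=> *; ring.
exact: rpredB.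
Qed.

Theorem theorem15 :
  forall A : 'rV[int]_24,
    ((forall m : nat, (0 < m)%N -> inP m A) <->
     (forall m : nat, (0 < m)%N -> odd m -> inP m A)) /\
    ((forall m : nat, (0 < m)%N -> odd m -> inP m A) <->
     (exists x y : int, A = A1 *~ x + A2 *~ y)).
Proof.
move=> A; have span_all : (exists x y, A = A1 *~ x + A2 *~ y) -> forall m, (0 < m)%N -> inP m A.
  by move=> [x [y ->]] m; apply: span_inP.
split; split.
- by move=> allA m m_gt0 _; apply: allA.
- by move=> /odd_inP_span /span_all.
- exact: odd_inP_span.
- by move=> /span_all allA m m_gt0 _; apply: allA.
Qed.
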